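(* Let $I$ be a finite set and $\{V^{(\tau)}\}_{\tau\in I}$ a family of mixed $\mathbb{R}$-Hodge structures. Let $V=\bigotimes_{\tau\in I}V^{(\tau)}$ (tensor product of $\mathbb{R}$-vector spaces), and for $\tau\in I$ define $$W^\tau_nV=\bigotimes_{\nu\ne\tau}V^{(\nu)}\otimes W_nV^{(\tau)},\qquad F^p_\tau V_{\mathbb{C}}=\bigotimes_{\nu\ne\tau}V^{(\nu)}_{\mathbb{C}}\otimes F^pV^{(\tau)}_{\mathbb{C}}.$$ Then $(V,\{W^\tau_\bullet\}_{\tau\in I},\{F^\bullet_\tau\}_{\tau\in I})$ is an object of $\mathrm{MHS}^{\boxtimes I}_{\mathbb{R}}$.
   Context: $\mathrm{MHS}^{\boxtimes I}_{\mathbb{R}}$ is the category of triples $(V,\{W^\tau_\bullet\}_{\tau\in I},\{F^\bullet_\tau\}_{\tau\in I})$ where $V$ is a finite-dimensional $\mathbb{R}$-vector space, each $W^\tau_\bullet$ is a finite ascending filtration of $V$ by $\mathbb{R}$-subspaces and each $F^\bullet_\tau$ a finite descending filtration of $V_{\mathbb{C}}=V\otimes\mathbb{C}$ by $\mathbb{C}$-subspaces, such that (1) for each $\tau\in I$, $(V,W^\tau_\bullet,F^\bullet_\tau)$ is a mixed $\mathbb{R}$-Hodge structure; (2) for $\tau\ne\nu$ in $I$, the subspaces $W^\nu_nV_{\mathbb{C}}$, $F^m_\nu V_{\mathbb{C}}$ and $\overline{F}^m_\nu V_{\mathbb{C}}$ are mixed $\mathbb{C}$-Hodge structures with respect to the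 filtrations induced by $W^\tau_\bullet$, $F^\bullet_\tau$ and $\overline{F}^\bullet_\tau$. A mixed $\mathbb{R}$-Hodge structure is a triple $(V,W_\bullet,F^\bullet)$ with $\operatorname{Gr}^W_nV_{\mathbb{C}}=\bigoplus_{p+q=n}(F^p\cap\overline{F}^q)\operatorname{Gr}^W_nV_{\mathbb{C}}$ for all $n$. *)

From HB Require Import structures.
From mathcomp Require Import all_boot all_order all_algebra.
From mathcomp Require Import complex.
From mathcomp Require Import reals.
Set Implicit Arguments. Unset Strict Implicit. Unset Printing Implicit Defensive.
Import Order.TTheory GRing.Theory Num.Theory.
Local Open Scope ring_scope.

(* Subspaces of K^n are represented (mxalgebra) by row spaces of n x n
   matrices; filtrations are int-indexed families of such matrices. *)

Definition asc_filt_in (K : fieldType) (n : nat) (U : 'M[K]_n)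
    (W : int -> 'M[K]_n) : Prop :=
  (forall k : int, (W k :&: U <= W (k + 1)%R :&: U)%MS) /\
  exists a b : int,
    (forall k : int, k < a -> (W k :&: U <= (0 : 'M[K]_n))%MS) /\
    (forall k : int, b <= k -> (U <= W k)%MS).

Definition desc_filt_in (K : fieldType) (n : nat) (U : 'M[K]_n)
    (F : int -> 'M[K]_n) : Prop :=
  (forall k : int, (F (k + 1)%R :&: U <= F k :&: U)%MS) /\
  exists a b : int,
    (forall k : int, k <= a -> (U <= F k)%MS) /\
    (forall k : int, b <= k -> (F k :&: U <= (0 : 'M[K]_n))%MS).

(** Hodge decomposition of the graded pieces: for every weight [k],
    Gr^W_k U = (+)_{p+q=k} (F^p Gr^W_k U) /\ (G^q Gr^W_k U)   (direct sum),
    where the filtrations W, F, G are those induced on U and F^p Gr^W_k U is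
    represented by its preimage (F^p /\ W_k + W_{k-1}) in W_k.  The (direct)
    sum over all p : int is expressed as: Gr is spanned by finitely many
    summands, and every finite subfamily of distinct summands is independent
    modulo W_{k-1} (rank count). *)
Definition hodge_graded (K : fieldType) (n : nat) (U : 'M[K]_n)
    (W F G : int -> 'M[K]_n) : Prop :=
  forall k : int,
    let Wk := (W k :&: U)%MS in
    let Wk1 := (W (k - 1)%R :&: U)%MS in
    let H := fun p : int =>
      ((F p :&: Wk + Wk1) :&: (G (k - p)%R :&: Wk + Wk1))%MS in
    (exists s : seq int, (Wk <= Wk1 + \sum_(p <- s) H p)%MS) /\
    (forall s : seq int, uniq s ->
       (\rank (Wk1 + \sum_(p <- s) H p)%MS - \rank Wk1 =
        \sum_(p <- s) (\rank (H p) - \rank Wk1))%N).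

Definition mhsC (C : fieldType) (n : nat) (U : 'M[C]_n)
    (W F G : int -> 'M[C]_n) : Prop :=
  [/\ asc_filt_in U W, desc_filt_in U F, desc_filt_in U G
    & hodge_graded U W F G].

Definition cplx_mx (R : rcfType) (m n : nat) (A : 'M[R]_(m, n))
  : 'M[R[i]]_(m, n) := map_mx (fun x : R => Complex x 0) A.
Definition conj_mx (R : rcfType) (m n : nat) (A : 'M[R[i]]_(m, n))
  : 'M[R[i]]_(m, n) := map_mx (@conjc R) A.

Definition mhsR (R : rcfType) (n : nat) (W : int -> 'M[R]_n)
    (F : int -> 'M[R[i]]_n) : Prop :=
  [/\ asc_filt_in 1%:M W, desc_filt_in 1%:M F
    & hodge_graded 1%:M (fun k => cplx_mx (W k)) F (fun p => conj_mx (F p))].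

Definition mhs_boxI (R : rcfType) (I : finType) (n : nat)
    (W : I -> int -> 'M[R]_n) (F : I -> int -> 'M[R[i]]_n) : Prop :=
  (forall tau : I, mhsR (W tau) (F tau)) /\
  (forall tau nu : I, tau != nu -> forall m : int,
     let Wt := fun k => cplx_mx (W tau k) in
     let Ft := F tau in
     let Fbt := fun p => conj_mx (F tau p) in
     [/\ mhsC (cplx_mx (W nu m)) Wt Ft Fbt,
         mhsC (F nu m) Wt Ft Fbt
       & mhsC (conj_mx (F nu m)) Wt Ft Fbt]).

(** Tensor products of coordinate spaces K^(d t), t in I: the basis of
    (x)_t K^(d t) is indexed by the finite type of multi-indices. *)
Definition tidx (I : finType) (d : I -> nat) : finType :=
  {dffun forall t : I, 'I_(d t)}.
Definition tdim (I : finType) (d : I -> nat) : nat := #|{: tidx d}|.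

(** [tensmx A] has as row space the tensor product of the row spaces of the
    [A t] (its rows are the Kronecker products of rows of the [A t]). *)
Definition tensmx (K : comNzRingType) (I : finType) (d : I -> nat)
    (A : forall t : I, 'M[K]_(d t)) : 'M[K]_(tdim d) :=
  \matrix_(i, k) \prod_(t : I)
     A t ((enum_val i : tidx d) t) ((enum_val k : tidx d) t).

Definition tensW (R : rcfType) (I : finType) (d : I -> nat)
    (W : forall t : I, int -> 'M[R]_(d t)) (tau : I) : int -> 'M[R]_(tdim d) :=
  fun k => tensmx (fun nu => if nu == tau then W nu k else 1%:M).

Definition tensF (R : rcfType) (I : finType) (d : I -> nat)
    (F : forall t : I, int -> 'M[R[i]]_(d t)) (tau : I)
  : int -> 'M[R[i]]_(tdim d) :=
  fun p => tensmx (fun nu => if nu == tau then F nu p else 1%:M).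

(* Fix tau.  For a family B of subspaces, X |-> (x)_{t <> tau} B_t (x) X (X in
   slot tau) maps subspaces of K^(d tau) into the tensor product, preserving
   inclusions and sums and multiplying ranks by prod_{t <> tau} rank B_t; the
   rank count then forces it to preserve intersections as well.  Moreover
   (x)_{t <> tau} K^(d t) (x) Y meets (x)_{t <> tau} B_t (x) K^(d tau) exactly
   in (x)_{t <> tau} B_t (x) Y.  Hence on U = (x)_{t <> tau} B_t (x) K^(d tau)
   the filtrations W^tau, F_tau, Fbar_tau are the images of those of V^(tau),
   and finiteness, exhaustivity and the Hodge decomposition of the graded
   pieces (a rank count) are transported from V^(tau) to U.  Taking B = 1
   gives the mixed R-Hodge structures, and the subspaces W^nu_m, F^m_nu,
   Fbar^m_nu for nu <> tau are all of the form U. *)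

From HB Require Import structures.
From mathcomp Require Import all_boot all_order all_algebra.
From mathcomp Require Import complex.
From mathcomp Require Import reals.
Import Order.TTheory GRing.Theory Num.Theory.
Local Open Scope ring_scope.
Local Set Implicit Arguments.
Local Unset Strict Implicit.

Section Kronecker.
Variables (K : comNzRingType) (I : finType).

Lemma bigA_distr_dffun (d : I -> nat) (F : forall t, 'I_(d t) -> K) :
  \prod_t \sum_(j : 'I_(d t)) F t j = \sum_(f : tidx d) \prod_t F t (f t).
Proof.
(* Pad every 'I_(d t) into a common 'I_D so that big_distr_big_dep applies. *)
pose D := (\max_t d t).+1.
have leD t : (d t <= D)%N by apply/leqW/leq_bigmax.
pose G t (n : nat) : K := oapp (F t) 0 (insub n).
have GF t (j : 'I_(d t)) : G t j = F t j by rewrite /G valK.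
have widen t : \sum_(j : 'I_(d t)) F t j = \sum_(j < D | (j < d t)%N) G t j.
  by rewrite -big_ord_widen //; apply: eq_bigr => j _; rewrite GF.
rewrite (eq_bigr _ (fun t _ => widen t)) (big_distr_big_dep ord0) /=.
pose pad (f : tidx d) : {ffun I -> 'I_D} := [ffun t => widen_ord (leD t) (f t)].
have pad_inj : injective pad.
  move=> f1 f2 /ffunP eq_f; apply/ffunP => t; apply/val_inj.
  by have := eq_f t; rewrite !ffunE => /(congr1 val).
transitivity (\sum_(g in pad @: [set: tidx d]) \prod_t G t (g t)).
  apply: eq_bigl => g; apply/idP/imsetP => [/forallP g_lt | [f _ ->]].
    have lt_g t : (g t < d t)%N by have := g_lt t; rewrite !inE.
    exists [ffun t => Ordinal (lt_g t)] => //.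
    by apply/ffunP => t; rewrite !ffunE; apply/val_inj.
  by rewrite inE; apply/forallP => t; rewrite !inE ffunE unfold_in /=.
rewrite big_imset /=; last exact: in2W.
by apply: eq_big => [f | f _]; rewrite ?inE //; apply: eq_bigr => t _; rewrite ffunE -GF.
Qed.

Definition kron_mx (m n : I -> nat) (A : forall t, 'M[K]_(m t, n t))
  : 'M[K]_(tdim m, tdim n) :=
  \matrix_(i, k) \prod_t A t ((enum_val i : tidx m) t) ((enum_val k : tidx n) t).

Lemma tensmxE (d : I -> nat) (A : forall t, 'M[K]_(d t)) : tensmx A = kron_mx A.
Proof. by []. Qed.

Lemma eq_kron_mx (m n : I -> nat) (A B : forall t, 'M[K]_(m t, n t)) :
  (forall t, A t = B t) -> kron_mx A = kron_mx B.
Proof.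
by move=> eqAB; apply/matrixP => i k; rewrite !mxE; apply: eq_bigr => t _; rewrite eqAB.
Qed.

Lemma mul_kron_mx (m n p : I -> nat) (A : forall t, 'M[K]_(m t, n t))
    (B : forall t, 'M[K]_(n t, p t)) :
  kron_mx A *m kron_mx B = kron_mx (fun t => A t *m B t).
Proof.
apply/matrixP => i k; rewrite !mxE.
set ei := enum_val i; set ek := enum_val k.
pose H (f : tidx n) := \prod_t (A t (ei t) (f t) * B t (f t) (ek t)).
transitivity (\sum_(j < tdim n) H (enum_val j)).
  by apply: eq_bigr => j _; rewrite !mxE -big_split.
under [RHS]eq_bigr do rewrite mxE.
rewrite -(big_enum_val H) bigA_distr_dffun.
by apply: eq_bigl => f; rewrite inE.
Qed.

Lemma kron_mx1 (d : I -> nat) : kron_mx (fun t => (1%:M : 'M[K]_(d t))) = 1%:M.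
Proof.
apply/matrixP => i k; rewrite !mxE.
have [<- | ne_ik] := eqVneq i k; first by apply: big1 => t _; rewrite mxE eqxx.
have /existsP[t ne_t] : [exists t, (enum_val i : tidx d) t != enum_val k t].
  rewrite -negb_forall; apply: contra ne_ik => /forallP eq_ik; apply/eqP.
  by apply: enum_val_inj; apply/ffunP => t; apply/eqP.
by rewrite (bigD1 t) //= mxE (negbTE ne_t) mul0r.
Qed.

End Kronecker.

Lemma map_kron_mx (K L : comNzRingType) (I : finType) (f : {rmorphism K -> L})
    (m n : I -> nat) (A : forall t, 'M[K]_(m t, n t)) :
  map_mx f (kron_mx A) = kron_mx (fun t => map_mx f (A t)).
Proof.
by apply/matrixP => i k; rewrite !mxE rmorph_prod; apply: eq_bigr => t _; rewrite mxE.
Qed.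

Lemma tdimE (I : finType) (d : I -> nat) : tdim d = (\prod_t d t)%N.
Proof.
rewrite /tdim card_dep_ffun foldrE big_image /=.
by apply: eq_bigr => t _; rewrite card_ord.
Qed.

Section KroneckerRank.
Variables (K : fieldType) (I : finType).

Lemma mxrank_kron_mx (m n : I -> nat) (A : forall t, 'M[K]_(m t, n t)) :
  \rank (kron_mx A) = (\prod_t \rank (A t))%N.
Proof.
have col_full : row_full (kron_mx (fun t => col_base (A t))).
  apply/row_fullP; exists (kron_mx (fun t => pinvmx (col_base (A t)))).
  by rewrite mul_kron_mx (eq_kron_mx (fun t => mulVpmx (col_base_full (A t)))) kron_mx1.
have row_free : row_free (kron_mx (fun t => row_base (A t))).
  apply/row_freeP; exists (kron_mx (fun t => pinvmx (row_base (A t)))).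
  by rewrite mul_kron_mx (eq_kron_mx (fun t => mulmxVp (row_base_free (A t)))) kron_mx1.
rewrite -(eq_kron_mx (fun t => mulmx_base (A t))) -mul_kron_mx (eqmxMfull _ col_full).
by move/eqP: row_free => ->; rewrite tdimE.
Qed.

Lemma kron_mx_fix (m n : I -> nat) p (A : forall t, 'M[K]_(m t, n t))
    (Q : forall t, 'M[K]_(n t)) (C : 'M[K]_(p, tdim n)) :
  (forall t, A t *m Q t = A t) -> (C <= kron_mx A)%MS -> C *m kron_mx Q = C.
Proof. by move=> AQ /submxP[D ->]; rewrite -mulmxA mul_kron_mx (eq_kron_mx AQ). Qed.

End KroneckerRank.

Section RankScalingEmbedding.
Variables (K : fieldType) (n N c : nat) (phi : 'M[K]_n -> 'M[K]_N).
Hypothesis phi_mono : forall X Y : 'M_n, (X <= Y)%MS -> (phi X <= phi Y)%MS.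
Hypothesis phi_adds_sub : forall X Y : 'M_n, (phi (X + Y)%MS <= phi X + phi Y)%MS.
Hypothesis mxrank_phi : forall X : 'M_n, \rank (phi X) = (\rank X * c)%N.

Lemma phi_adds X Y : (phi (X + Y)%MS :=: phi X + phi Y)%MS.
Proof.
by apply/eqmxP; rewrite phi_adds_sub addsmx_sub !phi_mono ?addsmxSl ?addsmxSr.
Qed.

Lemma phi_cap X Y : (phi (X :&: Y)%MS :=: phi X :&: phi Y)%MS.
Proof.
have sub_cap : (phi (X :&: Y)%MS <= phi X :&: phi Y)%MS.
  by rewrite sub_capmx !phi_mono ?capmxSl ?capmxSr.
apply/eqmxP/andP; split=> //; rewrite -(geq_leqif (mxrank_leqif_sup sub_cap)) mxrank_phi.
have := mxrank_sum_cap (phi X) (phi Y).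
rewrite -(phi_adds X Y) !mxrank_phi -mulnDl -(mxrank_sum_cap X Y).
by rewrite mulnDl => /addnI ->.
Qed.

Lemma phi_sub0 Z : (Z <= (0 : 'M_n))%MS -> (phi Z <= (0 : 'M_N))%MS.
Proof. by rewrite !submx0 -!mxrank_eq0 mxrank_phi => /eqP ->. Qed.

Lemma phi_sums (s : seq int) (H : int -> 'M_n) (H' : int -> 'M_N) :
    (forall p, (H' p :=: phi (H p))%MS) ->
  (\sum_(p <- s) H' p :=: phi (\sum_(p <- s) H p)%MS)%MS.
Proof.
move=> defH'; apply: (big_ind2 (fun A B => A :=: phi B)%MS) => //.
- by apply/eqmxP/andP; split; rewrite ?sub0mx ?phi_sub0.
- move=> A A' B B' defA defB.
  exact: eqmx_trans (adds_eqmx defA defB) (eqmx_sym (phi_adds _ _)).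
Qed.

Local Notation U := (phi 1%:M).

Lemma asc_filt_in_phi (W : int -> 'M_n) (W' : int -> 'M_N) :
    asc_filt_in 1%:M W -> (forall k Z, (W' k :&: phi Z :=: phi (W k :&: Z))%MS) ->
  asc_filt_in U W'.
Proof.
move=> [W_mono [a [b [W_sep W_exh]]]] defW'.
split=> [k | ]; first by rewrite !defW' phi_mono.
exists a, b; split=> k k_ab; first by rewrite defW' phi_sub0 ?W_sep.
apply: submx_trans (capmxSl (W' k) U).
by rewrite defW' phi_mono // sub_capmx W_exh ?submx_refl.
Qed.

Lemma desc_filt_in_phi (F : int -> 'M_n) (F' : int -> 'M_N) :
    desc_filt_in 1%:M F -> (forall k Z, (F' k :&: phi Z :=: phi (F k :&: Z))%MS) ->
  desc_filt_in U F'.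
Proof.
move=> [F_mono [a [b [F_exh F_sep]]]] defF'.
split=> [k | ]; first by rewrite !defF' phi_mono.
exists a, b; split=> k k_ab; last by rewrite defF' phi_sub0 ?F_sep.
apply: submx_trans (capmxSl (F' k) U).
by rewrite defF' phi_mono // sub_capmx F_exh ?submx_refl.
Qed.

Lemma hodge_graded_phi (W F G : int -> 'M_n) (W' F' G' : int -> 'M_N) :
    hodge_graded 1%:M W F G ->
    (forall k Z, (W' k :&: phi Z :=: phi (W k :&: Z))%MS) ->
    (forall k Z, (F' k :&: phi Z :=: phi (F k :&: Z))%MS) ->
    (forall k Z, (G' k :&: phi Z :=: phi (G k :&: Z))%MS) ->
  hodge_graded U W' F' G'.
Proof.
move=> hodge defW' defF' defG' k Wk' Wk1' H'.
have [span indep] := hodge k.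
set Wk := (W k :&: 1%:M)%MS; set Wk1 := (W (k - 1) :&: 1%:M)%MS.
have defWk : (Wk' :=: phi Wk)%MS := defW' k 1%:M.
have defWk1 : (Wk1' :=: phi Wk1)%MS := defW' (k - 1) 1%:M.
have graded_phi (A : int -> 'M_n) (A' : int -> 'M_N) j :
    (forall k Z, (A' k :&: phi Z :=: phi (A k :&: Z))%MS) ->
  (A' j :&: Wk' + Wk1' :=: phi (A j :&: Wk + Wk1)%MS)%MS.
  move=> defA'; apply: eqmx_trans (eqmx_sym (phi_adds _ _)).
  exact: adds_eqmx (eqmx_trans (cap_eqmx (eqmx_refl _) defWk) (defA' j Wk)) defWk1.
have defH p :
    (H' p :=: phi ((F p :&: Wk + Wk1) :&: (G (k - p) :&: Wk + Wk1))%MS)%MS.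
  apply: eqmx_trans (eqmx_sym (phi_cap _ _)).
  exact: cap_eqmx (graded_phi _ _ _ defF') (graded_phi _ _ _ defG').
have defS s : (Wk1' + \sum_(p <- s) H' p :=:
               phi (Wk1 + \sum_(p <- s) ((F p :&: Wk + Wk1) :&: (G (k - p) :&: Wk + Wk1)))%MS)%MS.
  apply: eqmx_trans (eqmx_sym (phi_adds _ _)).
  exact: adds_eqmx defWk1 (phi_sums s defH).
split=> [|s uniq_s].
  by have [s span_s] := span; exists s; rewrite defWk defS phi_mono.
rewrite defS defWk1 !mxrank_phi -mulnBl (indep s uniq_s) big_distrl /=.
by apply: eq_bigr => p _; rewrite defH mxrank_phi mulnBl.
Qed.

End RankScalingEmbedding.

Section MapFiltration.
Variables (K L : fieldType) (f : {rmorphism K -> L}) (n : nat).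

Lemma map_capmx1 (A : 'M[K]_n) :
  (map_mx f A :&: 1%:M :=: map_mx f (A :&: 1%:M)%MS)%MS.
Proof. by rewrite -(map_mx1 f); apply: eqmx_sym; apply: map_capmx. Qed.

Lemma asc_filt_in_map (W : int -> 'M[K]_n) :
  asc_filt_in 1%:M W -> asc_filt_in 1%:M (fun k => map_mx f (W k)).
Proof.
move=> [W_mono [a [b [W_sep W_exh]]]]; split=> [k | ].
  by rewrite !map_capmx1 map_submx.
exists a, b; split=> k k_ab.
  by rewrite map_capmx1 -(map_mx0 f) map_submx W_sep.
by rewrite -(map_mx1 f) map_submx W_exh.
Qed.

Lemma desc_filt_in_map (F : int -> 'M[K]_n) :
  desc_filt_in 1%:M F -> desc_filt_in 1%:M (fun k => map_mx f (F k)).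
Proof.
move=> [F_mono [a [b [F_exh F_sep]]]]; split=> [k | ].
  by rewrite !map_capmx1 map_submx.
exists a, b; split=> k k_ab.
  by rewrite -(map_mx1 f) map_submx F_exh.
by rewrite map_capmx1 -(map_mx0 f) map_submx F_sep.
Qed.

End MapFiltration.

Section TensorSlot.
Variables (K : fieldType) (I : finType) (d : I -> nat) (tau : I).
Local Notation one := (fun t : I => (1%:M : 'M[K]_(d t))).

Definition tensmx_with (B : forall t, 'M[K]_(d t)) (X : 'M[K]_(d tau))
  : 'M[K]_(tdim d) := tensmx (dfwith B X).

Lemma eq_tensmx_with (B B' : forall t, 'M[K]_(d t)) X :
  (forall t, B t = B' t) -> tensmx_with B X = tensmx_with B' X.
Proof.
move=> eqB; apply: eq_kron_mx => t.
by have [<- | ne] := eqVneq tau t; rewrite ?dfwith_in // !dfwith_out.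
Qed.

Lemma mul_tensmx_with (B B' : forall t, 'M[K]_(d t)) X X' :
  tensmx_with B X *m tensmx_with B' X' =
  tensmx_with (fun t => B t *m B' t) (X *m X').
Proof.
rewrite /tensmx_with !tensmxE mul_kron_mx; apply: eq_kron_mx => t.
by have [<- | ne] := eqVneq tau t; rewrite ?dfwith_in // !dfwith_out.
Qed.

Lemma tensmx_withM B X Y :
  tensmx_with B (X *m Y) = tensmx_with one X *m tensmx_with B Y.
Proof. by rewrite mul_tensmx_with; apply: eq_tensmx_with => t; rewrite mul1mx. Qed.

Lemma tensmx_with_split B X :
  tensmx_with B X = tensmx_with B 1%:M *m tensmx_with one X.
Proof. by rewrite mul_tensmx_with mul1mx; apply: eq_tensmx_with => t; rewrite mulmx1. Qed.

Lemma tensmx_withD B X Y :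
  tensmx_with B (X + Y) = tensmx_with B X + tensmx_with B Y.
Proof.
apply/matrixP => i k; rewrite !mxE.
rewrite (bigD1 tau) //= [in RHS](bigD1 tau) //= [X in _ = _ + X](bigD1 tau) //=.
rewrite !dfwith_in mxE mulrDl; congr (_ * _ + _ * _).
all: by apply: eq_bigr => t ne; rewrite !dfwith_out // eq_sym.
Qed.

Lemma tensmx_with1 : tensmx_with one 1%:M = 1%:M.
Proof.
rewrite /tensmx_with tensmxE -(kron_mx1 K d); apply: eq_kron_mx => t.
by case: dfwithP.
Qed.

Lemma mxrank_tensmx_with B X :
  \rank (tensmx_with B X) = (\rank X * \prod_(t | t != tau) \rank (B t))%N.
Proof.
rewrite /tensmx_with tensmxE mxrank_kron_mx (bigD1 tau) //= dfwith_in.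
by congr (_ * _)%N; apply: eq_bigr => t ne; rewrite dfwith_out // eq_sym.
Qed.

Lemma tensmx_with_mono B X Y :
  (X <= Y)%MS -> (tensmx_with B X <= tensmx_with B Y)%MS.
Proof. by case/submxP => D ->; rewrite tensmx_withM submxMl. Qed.

Lemma tensmx_with_adds_sub B X Y :
  (tensmx_with B (X + Y)%MS <= tensmx_with B X + tensmx_with B Y)%MS.
Proof.
have /sub_addsmxP[u ->] := submx_refl (X + Y)%MS.
by rewrite tensmx_withD !tensmx_withM addmx_sub_adds ?submxMl.
Qed.

Lemma tensmx_with_cap1 B Y :
  (tensmx_with one Y :&: tensmx_with B 1%:M :=: tensmx_with B Y)%MS.
Proof.
set C := (tensmx_with one Y :&: tensmx_with B 1%:M)%MS.
apply/eqmxP/andP; split; last first.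
  by rewrite sub_capmx {1}tensmx_with_split submxMl tensmx_with_mono ?submx1.
(* pinvmx A *m A is the identity on the row space of A, so C is fixed by the
   Kronecker product of such projections onto the factors of both spaces. *)
have fixY : C *m tensmx_with one (pinvmx Y *m Y) = C.
  apply: kron_mx_fix (capmxSl _ _) => t.
  have [<- | ne] := eqVneq tau t; rewrite ?dfwith_in ?dfwith_out //.
    by rewrite mulmxA mulmxKpV.
  by rewrite mulmx1.
have fixB : C *m tensmx_with (fun t => pinvmx (B t) *m B t) 1%:M = C.
  apply: kron_mx_fix (capmxSr _ _) => t.
  have [<- | ne] := eqVneq tau t; rewrite ?dfwith_in ?dfwith_out //.
    by rewrite mulmx1.
  by rewrite mulmxA mulmxKpV.
have fixBY : C *m tensmx_with (fun t => pinvmx (B t) *m B t) (pinvmx Y *m Y) = C.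
  rewrite -[pinvmx Y *m Y]mul1mx -(eq_tensmx_with _ (fun t => mulmx1 (pinvmx (B t) *m B t))).
  by rewrite -mul_tensmx_with mulmxA fixB fixY.
by rewrite -fixBY -mul_tensmx_with mulmxA submxMl.
Qed.

Lemma tensmx_with_cap B X Z :
  (tensmx_with one X :&: tensmx_with B Z :=: tensmx_with B (X :&: Z))%MS.
Proof.
apply: eqmx_trans _ (tensmx_with_cap1 B (X :&: Z)%MS).
apply: eqmx_trans (cap_eqmx (eqmx_refl _) (eqmx_sym (tensmx_with_cap1 B Z))) _.
rewrite capmxA; apply: cap_eqmx (eqmx_refl _); apply: eqmx_sym.
exact: (phi_cap (@tensmx_with_mono one) (@tensmx_with_adds_sub one) (mxrank_tensmx_with one)).
Qed.

Lemma tensmx_ifE (A B : forall t, 'M[K]_(d t)) :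
  tensmx (fun t => if t == tau then A t else B t) = tensmx_with B (A tau).
Proof.
by apply: eq_kron_mx => t; have [<- | ne] := eqVneq tau t; rewrite ?dfwith_in ?dfwith_out.
Qed.

Lemma tensmx_ifN nu (A : forall t, 'M[K]_(d t)) : tau != nu ->
  tensmx (fun t => if t == nu then A t else 1%:M) =
  tensmx_with (fun t => if t == nu then A t else 1%:M) 1%:M.
Proof.
move=> ne; apply: eq_kron_mx => t; have [<- | ne'] := eqVneq tau t.
  by rewrite dfwith_in (negbTE ne).
by rewrite dfwith_out.
Qed.

End TensorSlot.

Arguments tensmx_with {K I d} tau B X.

Lemma map_tensmx_if (K L : comNzRingType) (f : {rmorphism K -> L}) (I : finType)
    (d : I -> nat) (tau : I) (A : forall t, 'M[K]_(d t)) :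
  map_mx f (tensmx (fun t => if t == tau then A t else 1%:M)) =
  tensmx (fun t => if t == tau then map_mx f (A t) else 1%:M).
Proof.
rewrite !tensmxE map_kron_mx; apply: eq_kron_mx => t.
by case: ifP => _; rewrite ?map_mx1.
Qed.

Section TensorMixedHodge.
Variables (R : rcfType) (I : finType) (d : I -> nat)
  (W : forall t, int -> 'M[R]_(d t)) (F : forall t, int -> 'M[R[i]]_(d t)).
Local Notation one := (fun t : I => 1%:M).

Lemma tensWE tau k : tensW W tau k = tensmx_with tau one (W tau k).
Proof. exact: tensmx_ifE. Qed.

Lemma cplx_tensWE tau k :
  cplx_mx (tensW W tau k) = tensmx_with tau one (cplx_mx (W tau k)).
Proof. by rewrite /cplx_mx /tensW (map_tensmx_if (real_complex R)) tensmx_ifE. Qed.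

Lemma tensFE tau p : tensF F tau p = tensmx_with tau one (F tau p).
Proof. exact: tensmx_ifE. Qed.

Lemma conj_tensFE tau p :
  conj_mx (tensF F tau p) = tensmx_with tau one (conj_mx (F tau p)).
Proof. by rewrite /conj_mx /tensF (map_tensmx_if conjc) tensmx_ifE. Qed.

Lemma mhsC_tensmx_with tau (B : forall t, 'M[R[i]]_(d t)) :
    mhsR (W tau) (F tau) ->
  mhsC (tensmx_with tau B 1%:M) (fun k => cplx_mx (tensW W tau k)) (tensF F tau)
       (fun p => conj_mx (tensF F tau p)).
Proof.
case=> W_asc F_desc hodge.
have mono := @tensmx_with_mono _ _ d tau B.
have adds := @tensmx_with_adds_sub _ _ d tau B.
have rk := @mxrank_tensmx_with _ _ d tau B.
have cap (G' : int -> 'M_(tdim d)) G : (forall k, G' k = tensmx_with tau one (G k)) ->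
    forall k Z, (G' k :&: tensmx_with tau B Z :=: tensmx_with tau B (G k :&: Z))%MS.
  by move=> defG' k Z; rewrite defG'; apply: tensmx_with_cap.
have capW := cap _ _ (cplx_tensWE tau); have capF := cap _ _ (tensFE tau).
have capFb := cap _ _ (conj_tensFE tau).
split.
- exact: (asc_filt_in_phi mono rk (asc_filt_in_map (real_complex R) W_asc) capW).
- exact: (desc_filt_in_phi mono rk F_desc capF).
- exact: (desc_filt_in_phi mono rk (desc_filt_in_map conjc F_desc) capFb).
- exact: (hodge_graded_phi mono adds rk hodge capW capF capFb).
Qed.

End TensorMixedHodge.

Unset Implicit Arguments.

Theorem proposition6p2 (R : realType) (I : finType) (d : I -> nat)
    (W : forall t : I, int -> 'M[R]_(d t))
    (F : forall t : I, int -> 'M[R[i]]_(d t)) :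
  (forall t : I, mhsR (W t) (F t)) ->
  mhs_boxI (tensW W) (tensF F).
Proof.
move=> mhsV; split=> [tau | tau nu ne_tn m /=].
  have [W_asc _ _] := mhsV tau.
  have [_ F_desc _ hodge] := mhsC_tensmx_with (fun t => 1%:M) (mhsV tau).
  rewrite tensmx_with1 in F_desc hodge; split=> //.
  rewrite -(tensmx_with1 R d tau).
  apply: (asc_filt_in_phi (@tensmx_with_mono _ _ d tau _) (mxrank_tensmx_with _) W_asc).
  by move=> k Z; rewrite tensWE; apply: tensmx_with_cap.
rewrite /cplx_mx /conj_mx /tensW /tensF.
rewrite (map_tensmx_if (real_complex R)) (map_tensmx_if conjc) !(tensmx_ifN _ ne_tn).
by split; apply: mhsC_tensmx_with.
Qed.
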